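(* Restrict attention to feasible strategies $\boldsymbol{\phi}\in\mathcal{D}_{\boldsymbol{\phi}}(\boldsymbol{r})$ whose traffic satisfies $t_i(a,k)>0$ for all $i\in\mathcal{V}$ and $(a,k)\in\mathcal{S}$. On this set the map $\boldsymbol{\phi}\mapsto\boldsymbol{f}(\boldsymbol{\phi})=[f_{ij}(a,k),g_i(a,k)]$ is a bijection onto its image, with inverse $\boldsymbol{f}\mapsto\boldsymbol{\phi}(\boldsymbol{f})$ given by $\phi_{ij}(a,k)=f_{ij}(a,k)/t_i(a,k)$ and $\phi_{i0}(a,k)=g_i(a,k)/t_i(a,k)$, where $t_i(a,k)$ is computed from $\boldsymbol{f}$ by $t_i(a,k)=\sum_j f_{ij}(a,k)+g_i(a,k)$ (plus, if $k=|\mathcal{T}_a|$ and $i=d_a$, the arriving traffic). Moreover, $T$ is geodesically convex in $\boldsymbol{\phi}$ on this set: for any two such strategies $\boldsymbol{\phi}_1,\boldsymbol{\phi}_2$, the curve $\gamma_{\boldsymbol{\phi}_1\boldsymbol{\phi}_2}(s)=\boldsymbol{\phi}\big((1-s)\boldsymbol{f}(\boldsymbol{\phi}_1)+s\,\boldsymbol{f}(\boldsymbol{\phi}_2)\big)$, $s\in[0,1]$, joins $\boldsymbol{\phi}_1$ and $\boldsymbol{\phi}_2$ within the feasible set, and $s\mapsto T(\gamma_{\boldsymbol{\phi}_1\boldsymbol{\phi}_2}(s))$ is convex on $[0,1]$.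
   Context: Service-chain computing network model. $\mathcal{G}=(\mathcal{V},\mathcal{E})$ is a directed, strongly connected graph whose links are bidirectional. $\mathcal{A}$ is a finite set of applications; application $a$ has a destination $d_a\in\mathcal{V}$ and a chain of $|\mathcal{T}_a|$ tasks performed in order. The set of stages is $\mathcal{S}=\{(a,k): a\in\mathcal{A}, k=0,1,\dots,|\mathcal{T}_a|\}$, with packet sizes $L_{(a,k)}>0$. Exogenous input rates are $r_i(a)\ge 0$. The forwarding strategy $\boldsymbol{\phi}=[\phi_{ij}(a,k)]_{(a,k)\in\mathcal{S},i\in\mathcal{V},j\in\{0\}\cup\mathcal{V}}$ has $\phi_{ij}(a,k)\in[0,1]$; for $j\in\mathcal{V}$ it is the fraction of node $i$'s stage-$(a,k)$ traffic sent to node $j$ (with $\phi_{ij}(a,k)=0$ if $(i,j)\notin\mathcal{E}$), and $\phi_{i0}(a,k)$ is the fraction sent to $i$'s local processor, which converts each stage-$(a,k)$ packet into one stage-$(a,k+1)$ packet; $\phi_{i0}(a,|\mathcal{T}_a|)=0$. Flow conservation: $\sum_{j\in\{0\}\cup\mathcal{V}}\phi_{ij}(a,k)=0$ if $k=|\mathcal{T}_a|$ and $i=d_a$, and $=1$ otherwise. Traffic $t_i(a,k)$ satisfies $t_i(a,0)=\sum_{j\in\mathcal{V}}t_j(a,0)\phi_{ji}(a,0)+r_i(a)$ and, for $k\ge1$, $t_i(a,k)=\sum_{j\in\mathcal{V}}t_j(a,k)\phi_{ji}(a,k)+t_i(a,k-1)\phi_{i0}(a,k-1)$. Link flows $f_{ij}(a,k)=t_i(a,k)\phi_{ij}(a,k)$,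 processor inputs $g_i(a,k)=t_i(a,k)\phi_{i0}(a,k)$; the flow vector $\boldsymbol{f}=[f_{ij}(a,k),g_i(a,k)]$ satisfies the linear conservation $\sum_j f_{ji}(a,k)+g_i(a,k-1)=\sum_j f_{ij}(a,k)+g_i(a,k)$ (with $g_i(a,-1):=r_i(a)$, and the right side replaced by $0$ plus the exiting traffic at $i=d_a$, $k=|\mathcal{T}_a|$), nonnegativity, and so forms a convex set. Total link flow $F_{ij}=\sum_{(a,k)}L_{(a,k)}f_{ij}(a,k)$, workload $G_i=\sum_{(a,k)}w_i(a,k)g_i(a,k)$ with $w_i(a,k)>0$. $D_{ij}$, $C_i$ are increasing, continuously differentiable, convex. Total cost $T(\boldsymbol{\phi})=\sum_{(i,j)\in\mathcal{E}}D_{ij}(F_{ij})+\sum_{i\in\mathcal{V}}C_i(G_i)$. $\mathcal{D}_{\boldsymbol{\phi}}(\boldsymbol{r})$ is the set of $\boldsymbol{\phi}$ satisfying flow conservation with finite total cost. A function $h$ on a set $C\subset\mathbb{R}^n$ is geodesically convex with respect to a family of curves $\gamma_{x_1x_2}:[0,1]\to C$ joining $x_1$ to $x_2$ if $s\mapsto h(\gamma_{x_1x_2}(s))$ is convex for all $x_1,x_2\in C$. *)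

From HB Require Import structures.
From Stdlib Require Import ClassicalEpsilon.
From mathcomp Require Import all_boot all_order all_algebra.
From mathcomp Require Import all_classical all_reals all_analysis.
Set Implicit Arguments. Unset Strict Implicit. Unset Printing Implicit Defensive.
Import Order.TTheory GRing.Theory Num.Theory numFieldNormedType.Exports.
Local Open Scope ring_scope.

Section Model.
Context {R : realType} {V A : finType}.
(* E : links; d : destinations; nt a = |T_a|; r i a = r_i(a). *)
Variables (E : rel V) (d : A -> V) (nt : A -> nat) (r : V -> A -> R).

(* phi a k i (Some j) = phi_ij(a,k);  phi a k i None = phi_i0(a,k).
   Only the values on stages k <= nt a are meaningful. *)
Definition strategy := A -> nat -> V -> option V -> R.
(* flow vectors have the same shape: F a k i (Some j) = f_ij(a,k),
   F a k i None = g_i(a,k). *)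
Definition flowvec := A -> nat -> V -> option V -> R.
Definition trafficvec := A -> nat -> V -> R.

Definition is_last (a : A) (k : nat) (i : V) : bool := (k == nt a) && (i == d a).

Definition eqS (F G : A -> nat -> V -> option V -> R) :=
  forall a (k : nat), (k <= nt a)%N -> forall i j, F a k i j = G a k i j.

Definition flow_conservation (phi : strategy) :=
  forall a (k : nat), (k <= nt a)%N -> forall i : V,
    (forall j, 0 <= phi a k i j <= 1) /\
    (forall j : V, ~~ E i j -> phi a k i (Some j) = 0) /\
    (k = nt a -> phi a k i None = 0) /\
    (\sum_(j : option V) phi a k i j = if is_last a k i then 0 else 1).

Definition is_traffic (phi : strategy) (t : trafficvec) :=
  forall a (k : nat), (k <= nt a)%N -> forall i : V,
    t a k i = \sum_(j : V) t a k j * phi a k j (Some i)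
              + (if k == 0%N then r i a else t a k.-1 i * phi a k.-1 i None).

Definition traffic_well_defined (phi : strategy) :=
  exists t, is_traffic phi t /\
    forall t', is_traffic phi t' ->
      forall a (k : nat), (k <= nt a)%N -> forall i, t' a k i = t a k i.

Definition feasible (phi : strategy) :=
  flow_conservation phi /\ traffic_well_defined phi.

Definition traffic (phi : strategy) : trafficvec :=
  epsilon (inhabits (fun _ _ _ => 0)) (is_traffic phi).

Definition positive_traffic (phi : strategy) :=
  forall a (k : nat), (k <= nt a)%N -> forall i, 0 < traffic phi a k i.

Definition flow (phi : strategy) : flowvec :=
  fun a k i j => traffic phi a k i * phi a k i j.

Definition traffic_of_flow (F : flowvec) : trafficvec :=
  fun a k i => \sum_(j : option V) F a k i j +
    (if is_last a k i then
       \sum_(j : V) F a k j (Some i) + (if k == 0%N then r i a else F a k.-1 i None)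
     else 0).

Definition strategy_of_flow (F : flowvec) : strategy :=
  fun a k i j => F a k i j / traffic_of_flow F a k i.

Definition comb (s : R) (F1 F2 : flowvec) : flowvec :=
  fun a k i j => (1 - s) * F1 a k i j + s * F2 a k i j.

Variables (L : A -> nat -> R) (w : V -> A -> nat -> R)
          (D : V -> V -> R -> R) (C : V -> R -> R).

Definition link_flow (phi : strategy) (i j : V) : R :=
  \sum_(a : A) \sum_(k < (nt a).+1) L a k * flow phi a k i (Some j).

Definition workload (phi : strategy) (i : V) : R :=
  \sum_(a : A) \sum_(k < (nt a).+1) w i a k * flow phi a k i None.

Definition total_cost (phi : strategy) : R :=
  \sum_(i : V) \sum_(j : V | E i j) D i j (link_flow phi i j)
  + \sum_(i : V) C i (workload phi i).

End Model.

Definition convex_fun {R : realType} (h : R -> R) :=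
  forall x y t : R, 0 <= t <= 1 -> h ((1 - t) * x + t * y) <= (1 - t) * h x + t * h y.

Definition convex_on01 {R : realType} (h : R -> R) :=
  forall x y t : R, 0 <= x <= 1 -> 0 <= y <= 1 -> 0 <= t <= 1 ->
    h ((1 - t) * x + t * y) <= (1 - t) * h x + t * h y.

Definition cost_fun {R : realType} (h : R -> R) :=
  (forall x y : R, x <= y -> h x <= h y) /\
  (forall x : R, derivable h x 1) /\ (forall x : R, continuous_at x (derive1 h)) /\ convex_fun h.

From HB Require Import structures.
From Stdlib Require Import ClassicalEpsilon.
From mathcomp Require Import all_boot all_order all_algebra.
From mathcomp Require Import all_classical all_reals all_analysis.
From mathcomp Require Import ring lra.
Set Implicit Arguments. Unset Strict Implicit. Unset Printing Implicit Defensive.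
Import Order.TTheory GRing.Theory Num.Theory numFieldNormedType.Exports.
Local Open Scope ring_scope.

(* For a strategy with positive traffic, phi_ij = f_ij / t_i, and t_i is read
   off the flows as the outgoing mass of i (plus the arriving mass at the
   destination of the last stage); hence phi |-> f(phi) is invertible.  Along
   the curve gamma the flows are exactly (1 - s) f(phi1) + s f(phi2), with
   traffic (1 - s) t(phi1) + s t(phi2) > 0, so link flows and workloads are
   affine in s and T(gamma(s)) is convex.
   The delicate point is that the traffic equations of gamma(s) have a unique
   solution.  A nonzero solution x of the homogeneous equations of one stage of
   the substochastic matrix gamma(s) forces |x| to be invariant, so on the
   support of x that stage is stochastic and never reaches the processors.
   Since the support of phi1 (or phi2) is contained in that of gamma(s) and
   the row sums agree, the same holds for phi1, which therefore has a nonzero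
   invariant vector on that support; adding it to the traffic of phi1 at that
   stage gives a second solution of the traffic equations of phi1. *)

Lemma char_poly_trmx (F : comNzRingType) n (M : 'M[F]_n) : char_poly M^T = char_poly M.
Proof. by rewrite /char_poly /char_poly_mx -det_tr linearB /= tr_scalar_mx -map_trmx trmxK. Qed.

Lemma eigenvalue_trmx (F : fieldType) n (M : 'M[F]_n) a : eigenvalue M^T a = eigenvalue M a.
Proof. by rewrite !eigenvalue_root_char char_poly_trmx. Qed.

Lemma left_fixed_of_right_fixed (F : fieldType) (V : finType) (Q : V -> V -> F) (u : V -> F) :
  (exists i, u i != 0) -> (forall j, \sum_i Q j i * u i = u j) ->
  exists y : V -> F, (exists i, y i != 0) /\ forall i, y i = \sum_j y j * Q j i.
Proof.
move=> [i0 ui0] Qu.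
pose M : 'M[F]_#|V| := \matrix_(p, q) Q (enum_val p) (enum_val q).
have /eigenvalueP[v vM v_neq0] : eigenvalue M 1.
  rewrite -eigenvalue_trmx; apply/eigenvalueP; exists (\row_q u (enum_val q)).
    apply/rowP => p; rewrite scale1r !mxE -Qu (big_enum_val (A := V)).
    by apply: eq_bigr => q _; rewrite !mxE mulrC.
  by apply/eqP => /rowP /(_ (enum_rank i0)); rewrite !mxE enum_rankK; apply/eqP.
exists (fun i => v 0 (enum_rank i)); split.
  apply/existsP; apply: contraR v_neq0 => /existsPn v0; apply/eqP/rowP => q.
  by have := v0 (enum_val q); rewrite enum_valK negbK mxE => /eqP.
move=> i; move/rowP: vM => /(_ (enum_rank i)); rewrite scale1r !mxE => <-.
by rewrite (big_enum_val (A := V)); apply: eq_bigr => p _; rewrite !mxE enum_valK enum_rankK.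
Qed.

Lemma sum_option (R : nmodType) (V : finType) (G : option V -> R) :
  \sum_o G o = G None + \sum_x G (Some x).
Proof.
have -> : index_enum (option V) = None :: [seq Some x | x <- index_enum V].
  by rewrite /index_enum !unlock /= /option_enum !unlock.
by rewrite big_cons big_map.
Qed.

Section Substochastic.
Variables (R : realFieldType) (V : finType).
Implicit Types (G P : V -> option V -> R) (x y z : V -> R).

(* [G j (Some i)] is the fraction of the traffic of j sent to i and [G j None]
   the fraction sent to the local processor, as in one stage of a strategy. *)
Definition substochastic G := (forall j o, 0 <= G j o) /\ (forall j, \sum_o G j o <= 1).
Definition stationary G x := forall i, x i = \sum_j x j * G j (Some i).
Definition nonleaking G x := forall i, x i != 0 -> G i None = 0.

Lemma subinvariant_stationary G z : substochastic G ->
  (forall i, 0 <= z i) -> (forall i, z i <= \sum_j z j * G j (Some i)) ->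
  stationary G z /\ forall j, 0 < z j -> G j None = 0 /\ \sum_i G j (Some i) = 1.
Proof.
move=> [G_ge0 G_le1] z_ge0 z_sub.
pose out j := \sum_i G j (Some i).
have out_le j : G j None + out j <= 1 by rewrite /out -sum_option.
have out_ge0 j : 0 <= out j by apply: sumr_ge0.
have zout j : 0 <= z j - z j * out j.
  by rewrite subr_ge0 ler_piMr //; have := G_ge0 j None; have := out_le j; lra.
(* Exchanging the double sum, the two families of nonnegative gaps add up to 0. *)
have gap0 : \sum_i (\sum_j z j * G j (Some i) - z i) + \sum_j (z j - z j * out j) = 0.
  rewrite !sumrB exchange_big /=.
  under eq_bigr => j _ do rewrite -mulr_sumr.
  by rewrite addrC addrA subrK subrr.
move/eqP: gap0; rewrite paddr_eq0; first last.
- by apply: sumr_ge0.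
- by apply: sumr_ge0 => i _; rewrite subr_ge0.
have gapG i : \sum_j z j * G j (Some i) - z i >= 0 by rewrite subr_ge0.
case/andP => /eqP/psumr_eq0P-/(_ (fun i _ => gapG i)) zG.
move=> /eqP/psumr_eq0P-/(_ (fun j _ => zout j)) zout0; split.
  by move=> i; apply/eqP; rewrite eq_sym -subr_eq0 zG.
move=> j zj; have /eqP := zout0 j isT.
rewrite -{1}[z j]mulr1 -mulrBr mulf_eq0 (gt_eqF zj) subr_eq0 /= => /eqP out1.
split=> //; have := G_ge0 j None; have := out_le j; rewrite -out1; lra.
Qed.

Lemma stationary_support_closed G x : substochastic G -> stationary G x ->
  forall j, x j != 0 ->
  [/\ G j None = 0, \sum_i G j (Some i) = 1 & forall i, x i = 0 -> G j (Some i) = 0].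
Proof.
move=> sG xG j xj; have G_ge0 := sG.1.
have x_sub i : `|x i| <= \sum_j `|x j| * G j (Some i).
  rewrite {1}xG; apply: le_trans (ler_norm_sum _ _ _) (ler_sum _ _) => k _.
  by rewrite normrM (ger0_norm (G_ge0 _ _)).
have [zG z_closed] := subinvariant_stationary sG (fun i => normr_ge0 (x i)) x_sub.
have xj_gt0 : 0 < `|x j| by rewrite normr_gt0.
have [GN Gout] := z_closed j xj_gt0; split=> // i xi0.
have : `|x j| * G j (Some i) <= `|x i|.
  by rewrite [leRHS]zG (bigD1 j) //= lerDl sumr_ge0 // => k _; rewrite mulr_ge0.
rewrite xi0 normr0 => Gji_le0.
have : `|x j| * G j (Some i) == 0 by rewrite eq_le Gji_le0 mulr_ge0.
by rewrite mulf_eq0 (gt_eqF xj_gt0) => /eqP.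
Qed.

Lemma stationary_trivial_transfer G P : substochastic G ->
  (forall j o, G j o = 0 -> P j o = 0) -> (forall j, \sum_o P j o = \sum_o G j o) ->
  (forall y, stationary P y -> nonleaking P y -> forall i, y i = 0) ->
  forall x, stationary G x -> forall i, x i = 0.
Proof.
move=> sG GP sumPG P_triv x xG i1; apply/eqP/contraT => xi1.
pose S j := x j != 0.
have PS j : S j ->
    [/\ P j None = 0, \sum_i P j (Some i) = 1 & forall i, ~~ S i -> P j (Some i) = 0].
  move=> Sj; have [GN Gout Gcl] := stationary_support_closed sG xG Sj.
  split; first exact: GP.
    by have := sumPG j; rewrite !sum_option GN (GP _ _ GN) !add0r Gout.
  by move=> i /negPn/eqP xi; apply: GP; exact: Gcl.
pose Q j i := if S j then P j (Some i) else 0.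
pose u i : R := if S i then 1 else 0.
have u_neq0 : exists i, u i != 0 by exists i1; rewrite /u /S xi1 oner_neq0.
have Qu j : \sum_i Q j i * u i = u j.
  rewrite /Q /u; case: ifPn => Sj; last by rewrite big1 // => i _; rewrite mul0r.
  have [_ Pout Pcl] := PS j Sj; rewrite -[RHS]Pout; apply: eq_bigr => i _.
  by case: ifPn => [_|/Pcl ->]; rewrite ?mulr1 ?mul0r.
have [y [[iy yiy] yQ]] := left_fixed_of_right_fixed u_neq0 Qu.
have y_off i : ~~ S i -> y i = 0.
  move=> Si; rewrite yQ big1 // => j _; rewrite /Q.
  case: ifPn => [Sj|_]; last by rewrite mulr0.
  by have [_ _ ->] := PS j Sj; rewrite ?mulr0.
suff y0 : y iy = 0 by rewrite y0 eqxx in yiy.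
apply: P_triv.
  move=> i; rewrite {1}yQ; apply: eq_bigr => j _; rewrite /Q.
  by case: ifPn => // /y_off ->; rewrite !mul0r.
move=> i yi; have [/PS[] //|/y_off yi0] := boolP (S i).
by rewrite yi0 eqxx in yi.
Qed.

End Substochastic.

Section Convexity.
Variable R : realType.
Implicit Types (f g h : R -> R).

Lemma convex_fun_affine h a b : convex_fun h ->
  convex_fun (fun s => h ((1 - s) * a + s * b)).
Proof.
move=> h_cvx x y t t01.
have -> : (1 - ((1 - t) * x + t * y)) * a + ((1 - t) * x + t * y) * b =
    (1 - t) * ((1 - x) * a + x * b) + t * ((1 - y) * a + y * b) by ring.
exact: h_cvx.
Qed.

Lemma convex_funD f g : convex_fun f -> convex_fun g -> convex_fun (fun s => f s + g s).
Proof.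
move=> f_cvx g_cvx x y t t01; rewrite mulrDr mulrDr addrACA.
by apply: lerD; [exact: f_cvx | exact: g_cvx].
Qed.

Lemma convex_fun_sum (I : finType) (P : pred I) (F : I -> R -> R) :
  (forall i, P i -> convex_fun (F i)) -> convex_fun (fun s => \sum_(i | P i) F i s).
Proof.
move=> F_cvx x y t t01; rewrite !mulr_sumr -big_split.
by apply: ler_sum => i Pi; exact: F_cvx.
Qed.

Lemma convex_on01_eq f g : (forall s, 0 <= s <= 1 -> f s = g s) -> convex_fun g ->
  convex_on01 f.
Proof.
move=> fg g_cvx x y t /andP[x0 x1] /andP[y0 y1] /andP[t0 t1].
have s01 : 0 <= (1 - t) * x + t * y <= 1 by apply/andP; split; nra.
by rewrite !fg ?x0 ?y0 //; apply: g_cvx; rewrite t0.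
Qed.

End Convexity.

Section Traffic.
Context {R : realType} {V A : finType}.
Variables (E : rel V) (d : A -> V) (nt : A -> nat) (r : V -> A -> R).
Implicit Types (phi : @strategy R V A) (F : @flowvec R V A) (t : @trafficvec R V A).

Lemma traffic_solves phi :
  traffic_well_defined nt r phi -> is_traffic nt r phi (traffic nt r phi).
Proof. by case=> t [t_sol _]; apply: epsilon_spec; exists t. Qed.

Lemma traffic_unique phi t : traffic_well_defined nt r phi -> is_traffic nt r phi t ->
  forall a k, (k <= nt a)%N -> forall i, t a k i = traffic nt r phi a k i.
Proof.
move=> tw t_sol a k k_le i; have [t0 [_ t0_uniq]] := tw.
by rewrite (t0_uniq _ t_sol a k k_le) (t0_uniq _ (traffic_solves tw) a k k_le).
Qed.

(* The stages form a block-triangular system, solved stage after stage. *)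
Lemma is_traffic_unique phi t1 t2 :
  (forall a k, (k <= nt a)%N -> forall x, stationary (phi a k) x -> forall i, x i = 0) ->
  is_traffic nt r phi t1 -> is_traffic nt r phi t2 ->
  forall a k, (k <= nt a)%N -> forall i, t1 a k i = t2 a k i.
Proof.
move=> triv t1_sol t2_sol a.
have stage k : (k <= nt a)%N -> (k = 0%N \/ forall i, t1 a k.-1 i = t2 a k.-1 i) ->
    forall i, t1 a k i = t2 a k i.
  move=> k_le prev i; apply/eqP; rewrite -subr_eq0; apply/eqP; move: i.
  apply: (triv a k k_le) => i; rewrite (t1_sol a k k_le i) (t2_sol a k k_le i).
  under [RHS]eq_bigr => j _ do rewrite mulrBl.
  by case: prev => [->|->]; rewrite sumrB /=; ring.
elim=> [|k IH] k_le; apply: stage => //; [left | right] => //.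
by move=> i; apply: IH; apply: ltnW.
Qed.

(* A stationary vector that never reaches the processors could be added to
   the traffic of one stage without affecting any other stage. *)
Lemma stationary_nonleaking_trivial phi a k x :
  traffic_well_defined nt r phi -> (k <= nt a)%N ->
  stationary (phi a k) x -> nonleaking (phi a k) x -> forall i, x i = 0.
Proof.
move=> tw k_le x_stat x_nl i0.
have x_proc i : x i * phi a k i None = 0.
  by have [->|/x_nl ->] := eqVneq (x i) 0; rewrite ?mul0r ?mulr0.
pose t := traffic nt r phi.
pose t' : @trafficvec R V A := fun a' k' i =>
  t a' k' i + (if (a' == a) && (k' == k) then x i else 0).
have t'_sol : is_traffic nt r phi t'.
  move=> a' k' k'_le i; rewrite /t' /t (traffic_solves tw k'_le i) -/t.
  under [in RHS]eq_bigr => j _ do rewrite mulrDl.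
  rewrite big_split /=.
  have -> : \sum_j (if (a' == a) && (k' == k) then x j else 0) * phi a' k' j (Some i)
      = if (a' == a) && (k' == k) then x i else 0.
    case: ifP => [/andP[/eqP-> /eqP->]|_]; first by rewrite -x_stat.
    by rewrite big1 // => j _; rewrite mul0r.
  case: (k' == 0%N); first by rewrite addrAC.
  rewrite mulrDl.
  have -> : (if (a' == a) && (k'.-1 == k) then x i else 0) * phi a' k'.-1 i None = 0.
    by case: ifP => [/andP[/eqP-> /eqP->]|_]; rewrite ?x_proc ?mul0r.
  by rewrite addr0 addrAC.
have := traffic_unique tw t'_sol k_le i0; rewrite /t' !eqxx /= -/t => t'_eq.
lra.
Qed.

Lemma traffic_of_flowE phi a k i : feasible E d nt r phi -> (k <= nt a)%N ->
  traffic_of_flow d nt r (flow nt r phi) a k i = traffic nt r phi a k i.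
Proof.
move=> [cons tw] k_le; rewrite /traffic_of_flow /flow -mulr_sumr.
have [_ [_ [_ ->]]] := cons a k k_le i; case: ifP => _; last by rewrite mulr1 addr0.
by rewrite mulr0 add0r (traffic_solves tw k_le i).
Qed.

Lemma traffic_of_flow_eqS F1 F2 a k i : eqS nt F1 F2 -> (k <= nt a)%N ->
  traffic_of_flow d nt r F1 a k i = traffic_of_flow d nt r F2 a k i.
Proof.
move=> F12 k_le; have k1_le : (k.-1 <= nt a)%N by apply: leq_trans (leq_pred k) k_le.
rewrite /traffic_of_flow (eq_bigr _ (fun o _ => F12 a k k_le i o)).
by rewrite (eq_bigr _ (fun j _ => F12 a k k_le j (Some i))) (F12 a k.-1 k1_le i None).
Qed.

Lemma strategy_of_flow_eqS F1 F2 : eqS nt F1 F2 ->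
  eqS nt (strategy_of_flow d nt r F1) (strategy_of_flow d nt r F2).
Proof.
by move=> F12 a k k_le i j; rewrite /strategy_of_flow (traffic_of_flow_eqS i F12) ?F12.
Qed.

Lemma flowK phi : feasible E d nt r phi -> positive_traffic nt r phi ->
  eqS nt (strategy_of_flow d nt r (flow nt r phi)) phi.
Proof.
move=> feas pos a k k_le i j; rewrite /strategy_of_flow traffic_of_flowE //.
by rewrite /flow mulrC mulKf // gt_eqF // pos.
Qed.

Lemma flow_inj phi1 phi2 :
  feasible E d nt r phi1 -> positive_traffic nt r phi1 ->
  feasible E d nt r phi2 -> positive_traffic nt r phi2 ->
  eqS nt (flow nt r phi1) (flow nt r phi2) -> eqS nt phi1 phi2.
Proof.
move=> feas1 pos1 feas2 pos2 /strategy_of_flow_eqS flow12 a k k_le i j.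
by rewrite -(flowK feas1 pos1 k_le) -(flowK feas2 pos2 k_le) flow12.
Qed.

Lemma traffic_of_flow_comb s F1 F2 a k i :
  traffic_of_flow d nt r (comb s F1 F2) a k i =
  (1 - s) * traffic_of_flow d nt r F1 a k i + s * traffic_of_flow d nt r F2 a k i.
Proof.
rewrite /traffic_of_flow /comb !big_split -!mulr_sumr /=.
by case: (is_last d nt a k i); case: (k == 0%N); ring.
Qed.

End Traffic.

Section Geodesic.
Context {R : realType} {V A : finType}.
Variables (E : rel V) (d : A -> V) (nt : A -> nat) (r : V -> A -> R).
Variables phi1 phi2 : @strategy R V A.
Hypotheses (feas1 : feasible E d nt r phi1) (pos1 : positive_traffic nt r phi1).
Hypotheses (feas2 : feasible E d nt r phi2) (pos2 : positive_traffic nt r phi2).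

Definition geodesic s : @strategy R V A :=
  strategy_of_flow d nt r (comb s (flow nt r phi1) (flow nt r phi2)).

Definition geodesic_traffic s : @trafficvec R V A := fun a k i =>
  (1 - s) * traffic nt r phi1 a k i + s * traffic nt r phi2 a k i.

Lemma geodesic_traffic_gt0 s a k i : 0 <= s <= 1 -> (k <= nt a)%N ->
  0 < geodesic_traffic s a k i.
Proof.
move=> /andP[s0 s1] k_le; have := pos1 k_le i; have := pos2 k_le i.
rewrite /geodesic_traffic; nra.
Qed.

Lemma geodesicE s a k i j : (k <= nt a)%N ->
  geodesic s a k i j = comb s (flow nt r phi1) (flow nt r phi2) a k i j
                       / geodesic_traffic s a k i.
Proof.
by move=> k_le; rewrite /geodesic /strategy_of_flow traffic_of_flow_comb
  (traffic_of_flowE _ feas1 k_le) (traffic_of_flowE _ feas2 k_le).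
Qed.

Lemma geodesic_flow s a k i j : 0 <= s <= 1 -> (k <= nt a)%N ->
  geodesic_traffic s a k i * geodesic s a k i j =
  comb s (flow nt r phi1) (flow nt r phi2) a k i j.
Proof.
move=> s01 k_le; rewrite geodesicE // mulrC divfK //.
by rewrite gt_eqF // geodesic_traffic_gt0.
Qed.

Lemma geodesic_conservation s : 0 <= s <= 1 -> flow_conservation E d nt (geodesic s).
Proof.
move=> s01 a k k_le i; have /andP[s0 s1] := s01.
have [bnd1 [link1 [proc1 sum1]]] := feas1.1 a k k_le i.
have [bnd2 [link2 [proc2 sum2]]] := feas2.1 a k k_le i.
have t1_gt0 := pos1 k_le i; have t2_gt0 := pos2 k_le i.
have t_gt0 := geodesic_traffic_gt0 i s01 k_le.
split; [|split; [|split]].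
- move=> j; rewrite geodesicE // /comb /flow.
  have flow_bnd (u p : R) : 0 < u -> 0 <= p <= 1 -> 0 <= u * p <= u.
    by move=> u_gt0 /andP[p0 p1]; rewrite mulr_ge0 ?ler_piMr // ltW.
  have /andP[f1_ge0 f1_le] := flow_bnd _ _ t1_gt0 (bnd1 j).
  have /andP[f2_ge0 f2_le] := flow_bnd _ _ t2_gt0 (bnd2 j).
  apply/andP; split; first by apply: divr_ge0; [nra | exact: ltW].
  rewrite ler_pdivrMr // mul1r /geodesic_traffic; nra.
- by move=> j nE; rewrite geodesicE // /comb /flow link1 // link2 // !mulr0 addr0 mul0r.
- by move=> last; rewrite geodesicE // /comb /flow proc1 // proc2 // !mulr0 addr0 mul0r.
rewrite (eq_bigr _ (fun o _ => geodesicE s i o k_le)) -mulr_suml /comb /flow big_split /=.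
rewrite -!mulr_sumr sum1 sum2; case: ifP => _; first by rewrite !mulr0 addr0 mul0r.
by rewrite !mulr1 mulfV // gt_eqF.
Qed.

Lemma geodesic_traffic_solves s : 0 <= s <= 1 ->
  is_traffic nt r (geodesic s) (geodesic_traffic s).
Proof.
move=> s01 a k k_le i; have k1_le : (k.-1 <= nt a)%N := leq_trans (leq_pred k) k_le.
under [in RHS]eq_bigr => j _ do rewrite geodesic_flow //.
rewrite (geodesic_flow _ _ s01 k1_le) /comb /flow /geodesic_traffic.
rewrite (traffic_solves feas1.2 k_le i) (traffic_solves feas2.2 k_le i).
by case: (k == 0%N); rewrite big_split -!mulr_sumr /=; ring.
Qed.

Lemma geodesic_support s a k j o : 0 <= s <= 1 -> (k <= nt a)%N ->
  geodesic s a k j o = 0 -> (s < 1 -> phi1 a k j o = 0) /\ (0 < s -> phi2 a k j o = 0).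
Proof.
move=> s01 k_le geo0; have /andP[s0 s1] := s01.
have := geodesic_flow j o s01 k_le; rewrite geo0 mulr0 /comb /flow => /esym/eqP.
have /andP[p1_ge0 _] := (feas1.1 a k k_le j).1 o.
have /andP[p2_ge0 _] := (feas2.1 a k k_le j).1 o.
have t1_gt0 := pos1 k_le j; have t2_gt0 := pos2 k_le j.
rewrite paddr_eq0; first last.
- by apply: mulr_ge0 => //; apply: mulr_ge0 => //; exact: ltW.
- by apply: mulr_ge0; [lra | apply: mulr_ge0 => //; exact: ltW].
case/andP=> f1_0 f2_0.
split=> [s_lt1 | s_gt0].
  by move: f1_0; rewrite !mulf_eq0 subr_eq0 gt_eqF // gt_eqF //= => /eqP.
by move: f2_0; rewrite !mulf_eq0 gt_eqF // gt_eqF //= => /eqP.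
Qed.

Lemma geodesic_stationary_trivial s a k x : 0 <= s <= 1 -> (k <= nt a)%N ->
  stationary (geodesic s a k) x -> forall i, x i = 0.
Proof.
move=> s01 k_le; have /andP[s0 s1] := s01.
have cons := geodesic_conservation s01 k_le.
have sub : substochastic (geodesic s a k).
  split=> [j o | j]; first by have [/(_ o)/andP[]] := cons j.
  by have [_ [_ [_ ->]]] := cons j; case: ifP => _; lra.
have same_sums phi : feasible E d nt r phi ->
    forall j, \sum_o phi a k j o = \sum_o geodesic s a k j o.
  by move=> feas j; have [_ [_ [_ ->]]] := feas.1 a k k_le j; have [_ [_ [_ ->]]] := cons j.
have [s_lt1 | s_ge1] := ltP s 1.
  apply: (stationary_trivial_transfer sub _ (same_sums _ feas1)).
    by move=> j o /(geodesic_support s01 k_le)[+ _]; apply.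
  by move=> y; apply: stationary_nonleaking_trivial feas1.2 k_le.
apply: (stationary_trivial_transfer sub _ (same_sums _ feas2)).
  by move=> j o /(geodesic_support s01 k_le)[_]; apply; lra.
by move=> y; apply: stationary_nonleaking_trivial feas2.2 k_le.
Qed.

Lemma geodesic_traffic_well_defined s : 0 <= s <= 1 ->
  traffic_well_defined nt r (geodesic s).
Proof.
move=> s01; exists (geodesic_traffic s); split; first exact: geodesic_traffic_solves.
move=> t t_sol a k k_le i.
apply: (is_traffic_unique _ t_sol (geodesic_traffic_solves s01) k_le) => a' k' k'_le x.
exact: geodesic_stationary_trivial s01 k'_le.
Qed.

Lemma traffic_geodesic s a k i : 0 <= s <= 1 -> (k <= nt a)%N ->
  traffic nt r (geodesic s) a k i = geodesic_traffic s a k i.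
Proof.
move=> s01 k_le; have tw := geodesic_traffic_well_defined s01.
by rewrite (traffic_unique tw (geodesic_traffic_solves s01) k_le).
Qed.

Lemma geodesic_feasible s : 0 <= s <= 1 ->
  feasible E d nt r (geodesic s) /\ positive_traffic nt r (geodesic s).
Proof.
move=> s01; split.
  by split; [exact: geodesic_conservation | exact: geodesic_traffic_well_defined].
by move=> a k k_le i; rewrite traffic_geodesic // geodesic_traffic_gt0.
Qed.

Lemma flow_geodesic s a k i j : 0 <= s <= 1 -> (k <= nt a)%N ->
  flow nt r (geodesic s) a k i j = comb s (flow nt r phi1) (flow nt r phi2) a k i j.
Proof. by move=> s01 k_le; rewrite /flow traffic_geodesic // geodesic_flow. Qed.

Lemma geodesic0 : eqS nt (geodesic 0) phi1.
Proof.
have comb0 : eqS nt (comb 0 (flow nt r phi1) (flow nt r phi2)) (flow nt r phi1).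
  by move=> a k _ i j; rewrite /comb subr0 mul1r mul0r addr0.
move=> a k k_le i j.
by rewrite /geodesic (strategy_of_flow_eqS d r comb0 k_le) (flowK feas1 pos1).
Qed.

Lemma geodesic1 : eqS nt (geodesic 1) phi2.
Proof.
have comb1 : eqS nt (comb 1 (flow nt r phi1) (flow nt r phi2)) (flow nt r phi2).
  by move=> a k _ i j; rewrite /comb subrr mul1r mul0r add0r.
move=> a k k_le i j.
by rewrite /geodesic (strategy_of_flow_eqS d r comb1 k_le) (flowK feas2 pos2).
Qed.

Lemma link_flow_geodesic (L : A -> nat -> R) s i j : 0 <= s <= 1 ->
  link_flow nt r L (geodesic s) i j =
  (1 - s) * link_flow nt r L phi1 i j + s * link_flow nt r L phi2 i j.
Proof.
move=> s01; rewrite /link_flow !mulr_sumr -big_split; apply: eq_bigr => a _.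
rewrite !mulr_sumr -big_split; apply: eq_bigr => k _.
by rewrite flow_geodesic // 1?ltnSE //= /comb; ring.
Qed.

Lemma workload_geodesic (w : V -> A -> nat -> R) s i : 0 <= s <= 1 ->
  workload nt r w (geodesic s) i =
  (1 - s) * workload nt r w phi1 i + s * workload nt r w phi2 i.
Proof.
move=> s01; rewrite /workload !mulr_sumr -big_split; apply: eq_bigr => a _.
rewrite !mulr_sumr -big_split; apply: eq_bigr => k _.
by rewrite flow_geodesic // 1?ltnSE //= /comb; ring.
Qed.

Lemma total_cost_geodesic_convex (L : A -> nat -> R) (w : V -> A -> nat -> R)
    (D : V -> V -> R -> R) (C : V -> R -> R) :
  (forall i j, E i j -> convex_fun (D i j)) -> (forall i, convex_fun (C i)) ->
  convex_on01 (fun s => total_cost E nt r L w D C (geodesic s)).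
Proof.
move=> D_cvx C_cvx.
apply: (convex_on01_eq (g := fun s =>
  \sum_i \sum_(j | E i j)
     D i j ((1 - s) * link_flow nt r L phi1 i j + s * link_flow nt r L phi2 i j)
  + \sum_i C i ((1 - s) * workload nt r w phi1 i + s * workload nt r w phi2 i))).
  move=> s s01; rewrite /total_cost; congr (_ + _); apply: eq_bigr => i _.
    by apply: eq_bigr => j _; rewrite link_flow_geodesic.
  by rewrite workload_geodesic.
apply: convex_funD; apply: convex_fun_sum => i _.
  by apply: convex_fun_sum => j Eij; apply: convex_fun_affine; apply: D_cvx.
exact: convex_fun_affine.
Qed.

End Geodesic.

Theorem proposition3 (R : realType) (V A : finType) (E : rel V) (d : A -> V)
    (nt : A -> nat) (r : V -> A -> R) (L : A -> nat -> R) (w : V -> A -> nat -> R)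
    (D : V -> V -> R -> R) (C : V -> R -> R) :
  (forall i j, E i j -> E j i) ->
  (forall i j, connect E i j) ->
  (forall i a, 0 <= r i a) ->
  (forall a k, 0 < L a k) ->
  (forall i a k, 0 < w i a k) ->
  (forall i j, E i j -> cost_fun (D i j)) ->
  (forall i, cost_fun (C i)) ->
  let P := fun phi : strategy => feasible E d nt r phi /\ positive_traffic nt r phi in
  (forall phi1 phi2, P phi1 -> P phi2 ->
     eqS nt (flow nt r phi1) (flow nt r phi2) -> eqS nt phi1 phi2) /\
  (forall phi, P phi -> eqS nt (strategy_of_flow d nt r (flow nt r phi)) phi) /\
  (forall phi1 phi2, P phi1 -> P phi2 ->
     let gamma := fun s : R =>
       strategy_of_flow d nt r (comb s (flow nt r phi1) (flow nt r phi2)) in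
     eqS nt (gamma 0) phi1 /\ eqS nt (gamma 1) phi2 /\
     (forall s, 0 <= s <= 1 -> P (gamma s)) /\
     convex_on01 (fun s => total_cost E nt r L w D C (gamma s))).
Proof.
move=> _ _ _ _ _ D_cost C_cost P; rewrite {}/P; split; [|split].
- by move=> phi1 phi2 [feas1 pos1] [feas2 pos2]; exact: flow_inj feas1 pos1 feas2 pos2.
- by move=> phi [feas pos]; exact: flowK feas pos.
move=> phi1 phi2 [feas1 pos1] [feas2 pos2].
split; first exact: geodesic0 feas1 pos1.
split; first exact: geodesic1 feas2 pos2.
split; first by move=> s; apply: geodesic_feasible.
apply: (total_cost_geodesic_convex feas1 pos1 feas2 pos2).
  by move=> i j Eij; have [_ [_ [_ D_cvx]]] := D_cost i j Eij.
by move=> i; have [_ [_ [_ C_cvx]]] := C_cost i.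
Qed.
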